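(* Let $\Sigma$ be a Riemann surface with a holomorphic cubic differential $\phi$ having a pole of order $n+3\ge4$ at a puncture $p$, and identify a punctured closed neighborhood of $p$ with the glued surface $M$ built from the closed half-planes $\overline H_1,\dots,\overline H_n$ (each $\overline H_i\cong\{w:\mathrm{Re}\,w\ge0\}$ with $\phi=dw^3$) as described in the context. Let $g$ be a conformal metric on $\Sigma$ satisfying $\kappa_g=-1+\|\phi\|_g^2$ with $\kappa_g\le0$. Then there are constants $C,r_0>0$ such that for every $i\in\{1,\dots,n\}$, writing $g=e^{u}|dw|^2$ on $\overline H_i$, one has $0\le u(w)\le C|w|^{1/2}e^{-\sqrt6|w|}$ for all $w\in\overline H_i$ with $|w|\ge r_0$.
   Context: For $g=e^u|dw|^2$, $\phi=\phi(w)dw^3$: $\|\phi\|_g^2=e^{-3u}|\phi|^2$, $\kappa_g=-\frac12e^{-u}\Delta u$. The surface $M$: there are $a_i>0$, $b_i\in\mathbb R$; in $\overline H_i$ let $T_i=\{ib_i+\rho e^{i\theta}:\rho\ge0,\pi/6\le\theta\le\pi/2\}$ and $B_i=\{i(b_i-a_i)+\rho e^{i\theta}:\rho\ge0,-\pi/2\le\theta\le-\pi/6\}$; $M$ is the quotient of $\bigsqcup\overline H_i$ gluing $B_{i+1}$ to $T_i$ (indices mod $n$) by $w\mapsto e^{2\pi i/3}(w-i(b_{i+1}-a_{i+1}))+ib_i$; the identification with a punctured closed neighborhood of $p$ carries $\phi$ to the cubic differential induced by $dw^3$ (such an identification always exists). *)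

(* A point w = x + i y of C is written as a pair of
   real coordinates (x, y); functions on a closed half-plane are real functions
   of two real variables. *)
From Stdlib Require Import Reals Lra.
From Coquelicot Require Import Coquelicot.
Open Scope R_scope.

Definition D1 (f : R -> R -> R) : R -> R -> R := fun x y => Derive (fun t => f t y) x.
Definition D2 (f : R -> R -> R) : R -> R -> R := fun x y => Derive (fun t => f x t) y.

Definition cont2 (f : R -> R -> R) (x y : R) : Prop :=
  continuous (fun z : R * R => f (fst z) (snd z)) (x, y).

Definition C2_on (U : R -> R -> Prop) (f : R -> R -> R) : Prop :=
  forall x y, U x y ->
    ex_derive (fun t => f t y) x /\ ex_derive (fun t => f x t) y /\
    ex_derive (fun t => D1 f t y) x /\ ex_derive (fun t => D1 f x t) y /\
    ex_derive (fun t => D2 f t y) x /\ ex_derive (fun t => D2 f x t) y /\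
    cont2 f x y /\ cont2 (D1 f) x y /\ cont2 (D2 f) x y /\
    cont2 (D1 (D1 f)) x y /\ cont2 (D2 (D1 f)) x y /\
    cont2 (D1 (D2 f)) x y /\ cont2 (D2 (D2 f)) x y.

Definition laplacian (f : R -> R -> R) (x y : R) : R :=
  D1 (D1 f) x y + D2 (D2 f) x y.

Definition open_half (x y : R) : Prop := 0 < x.
Definition closed_half (x y : R) : Prop := 0 <= x.

(* For g = e^u |dw|^2:  kappa_g = -1/2 e^{-u} Delta u *)
Definition gauss_curv (u : R -> R -> R) (x y : R) : R :=
  - / 2 * exp (- u x y) * laplacian u x y.

(* For phi = dw^3 (|phi| = 1):  ||phi||_g^2 = e^{-3u} |phi|^2 = e^{-3u} *)
Definition phi_norm2 (u : R -> R -> R) (x y : R) : R := exp (- 3 * u x y).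

Definition modw (x y : R) : R := sqrt (x ^ 2 + y ^ 2).

(* B_j = { i(b_j - a_j) + rho e^{i theta} : rho >= 0, -pi/2 <= theta <= -pi/6 },
   with c = b_j - a_j: X = x >= 0 and Y = y - c <= - X / sqrt 3. *)
Definition in_B (c x y : R) : Prop := 0 <= x /\ sqrt 3 * (y - c) <= - x.

(* gluing map w |-> e^{2 pi i/3} (w - i c) + i b, with c = b_{i+1} - a_{i+1}, b = b_i,
   e^{2 pi i/3} = -1/2 + i sqrt3/2 *)
Definition glue_x (c b x y : R) : R := - x / 2 - sqrt 3 * (y - c) / 2.
Definition glue_y (c b x y : R) : R := sqrt 3 * x / 2 - (y - c) / 2 + b.

(* With [g = e^u |dw|^2] the curvature equation reads [Delta u = F u], where
   [F s = 2 e^s - 2 e^(-2 s)], and nonpositive curvature forces [u >= 0].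
   Comparing [u] on unit disks with the barrier [ln 8 - 2 ln (1 - |w - w0|^2)]
   (a Keller-Osserman argument) gives [u <= ln 8] at distance [>= 1] from the boundary
   of a half-plane, and the gluing brings every point far from the segment
   [i [b - a, b]] to such a position in a neighbouring half-plane.  Let [rho] be the
   distance to that segment, which the gluing preserves.  The explicit solution [Phi]
   of [Phi'' = 6 Phi - 3 Phi^2] decays like [e^(-sqrt 6 rho)], and since the level sets
   of [rho] have curvature at most [1/rho] and [F s >= 6 s - 3 s^2], the function
   [Phi (rho) + eps e^rho] is a supersolution.  The maximum principle, run on all
   half-planes at once and using the gluing to push maxima off the boundary lines,
   gives [u <= Phi (rho) <= C e^(-sqrt 6 |w|)]. *)

From Stdlib Require Import Reals Lra Lia ClassicalEpsilon.
From Coquelicot Require Import Coquelicot.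
Open Scope R_scope.

(** * Second-order calculus in one variable *)

Lemma continuity_pt_of_is_derive (f : R -> R) (x df : R) :
  is_derive f x df -> continuity_pt f x.
Proof.
  intro H. apply continuity_pt_filterlim.
  apply (@ex_derive_continuous R_AbsRing R_NormedModule). now exists df.
Qed.

Lemma continuity_pt_ball (g : R -> R) (s0 : R) : continuity_pt g s0 ->
  forall eps, 0 < eps -> exists d, 0 < d /\
    forall t, Rabs (t - s0) < d -> Rabs (g t - g s0) < eps.
Proof.
  intros H eps Heps. destruct (H eps Heps) as [d [Hd Hg]]. exists d; split; [exact Hd|].
  intros t Ht. destruct (Req_dec t s0) as [->|Hne].
  - rewrite Rminus_diag, Rabs_R0. exact Heps.
  - apply Hg. split; [split; [exact I | auto] | exact Ht].
Qed.

Lemma continuity_pt_of_ball (g : R -> R) (s0 : R) :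
  (forall eps, 0 < eps -> exists d, 0 < d /\
    forall t, Rabs (t - s0) < d -> Rabs (g t - g s0) < eps) ->
  continuity_pt g s0.
Proof.
  intros H eps Heps. destruct (H eps Heps) as [d [Hd Hg]].
  exists d; split; [exact Hd|]. intros t [_ Ht]. exact (Hg t Ht).
Qed.

Lemma continuity_pt_of_lipschitz (g : R -> R) (s0 : R) :
  (forall t, Rabs (g t - g s0) <= Rabs (t - s0)) -> continuity_pt g s0.
Proof.
  intro H. apply continuity_pt_of_ball. intros eps Heps. exists eps; split; [exact Heps|].
  intros t Ht. eapply Rle_lt_trans; [apply H | exact Ht].
Qed.

Lemma continuity_pt_Rmax_const (q z : R) : continuity_pt (fun t => Rmax t q) z.
Proof.
  apply continuity_pt_of_lipschitz. intro t. unfold Rmax. repeat destruct Rle_dec; split_Rabs; lra.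
Qed.

Lemma continuity_pt_Rmin_const (q z : R) : continuity_pt (fun t => Rmin t q) z.
Proof.
  apply continuity_pt_of_lipschitz. intro t. unfold Rmin. repeat destruct Rle_dec; split_Rabs; lra.
Qed.

Lemma cont2_slice_x (f : R -> R -> R) (x y : R) :
  cont2 f x y -> continuity_pt (fun t => f t y) x.
Proof.
  intro H. apply continuity_pt_filterlim.
  apply (continuous_comp (fun t => (t, y)) (fun z => f (fst z) (snd z))); [|exact H].
  apply (continuous_comp_2 (fun t => t) (fun _ => y) pair);
    [apply continuous_id | apply continuous_const |].
  apply continuous_ext with (f := fun z => z); [now intros [] | apply continuous_id].
Qed.

Lemma cont2_slice_y (f : R -> R -> R) (x y : R) :
  cont2 f x y -> continuity_pt (fun t => f x t) y.
Proof.
  intro H. apply continuity_pt_filterlim.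
  apply (continuous_comp (fun t => (x, t)) (fun z => f (fst z) (snd z))); [|exact H].
  apply (continuous_comp_2 (fun _ => x) (fun t => t) pair);
    [apply continuous_const | apply continuous_id |].
  apply continuous_ext with (f := fun z => z); [now intros [] | apply continuous_id].
Qed.

Lemma MVT_ball (f f1 : R -> R) (s0 d h : R) :
  (forall t, Rabs (t - s0) < d -> is_derive f t (f1 t)) -> Rabs h < d ->
  exists c, Rabs (c - s0) <= Rabs h /\ 0 <= (c - s0) * h /\ f (s0 + h) - f s0 = f1 c * h.
Proof.
  intros Hf Hh.
  assert (Hseg : forall t, Rmin s0 (s0 + h) <= t <= Rmax s0 (s0 + h) ->
                 Rabs (t - s0) <= Rabs h /\ 0 <= (t - s0) * h).
  { intros t. unfold Rmin, Rmax. destruct Rle_dec; intros; split_Rabs; split; nra. }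
  destruct (MVT_gen f s0 (s0 + h) f1) as [c [Hc Hfc]].
  - intros t Ht. apply Hf. apply (Rle_lt_trans _ (Rabs h)); [apply Hseg; lra | exact Hh].
  - intros t Ht. apply (continuity_pt_of_is_derive _ _ (f1 t)), Hf.
    apply (Rle_lt_trans _ (Rabs h)); [apply Hseg, Ht | exact Hh].
  - exists c. destruct (Hseg c Hc) as [H1 H2]. repeat split; [exact H1 | exact H2 |].
    rewrite Hfc. ring.
Qed.

Lemma taylor_upper (f f1 f2 : R -> R) (s0 d A : R) :
  (forall t, Rabs (t - s0) < d ->
     is_derive f t (f1 t) /\ is_derive f1 t (f2 t) /\ f2 t <= A) ->
  forall h, Rabs h < d -> f (s0 + h) <= f s0 + f1 s0 * h + A * h ^ 2 / 2.
Proof.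
  intros Hf h Hh.
  destruct (MVT_ball (fun t => f t - (f1 s0 * (t - s0) + A * (t - s0) ^ 2 / 2))
              (fun t => f1 t - (f1 s0 + A * (t - s0))) s0 d h) as [c [Hc [Hch Hk]]].
  { intros t Ht. destruct (Hf t Ht) as [Hd _].
    apply (is_derive_minus _ _ _ _ _ Hd). auto_derive; [exact I | field]. }
  { exact Hh. }
  destruct (MVT_ball f1 f2 s0 d (c - s0)) as [e [He [_ Hf1]]].
  { intros t Ht. apply Hf, Ht. }
  { now apply (Rle_lt_trans _ (Rabs h)). }
  assert (Hf2e : f2 e <= A) by (apply Hf; lra).
  replace (s0 + (c - s0)) with c in Hf1 by ring.
  assert (Hsign : (f1 c - (f1 s0 + A * (c - s0))) * h <= 0).
  { replace (f1 c - (f1 s0 + A * (c - s0))) with ((f2 e - A) * (c - s0)) by lra. nra. }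
  replace (s0 + h - s0) with h in Hk by ring. replace (s0 - s0) with 0 in Hk by ring.
  lra.
Qed.

Lemma taylor_lower (f f1 f2 : R -> R) (s0 d B : R) :
  (forall t, Rabs (t - s0) < d ->
     is_derive f t (f1 t) /\ is_derive f1 t (f2 t) /\ B <= f2 t) ->
  forall h, Rabs h < d -> f s0 + f1 s0 * h + B * h ^ 2 / 2 <= f (s0 + h).
Proof.
  intros Hf h Hh.
  enough (- f (s0 + h) <= - f s0 + - f1 s0 * h + - B * h ^ 2 / 2) by lra.
  apply (taylor_upper (fun t => - f t) (fun t => - f1 t) (fun t => - f2 t) s0 d (- B));
    [|exact Hh].
  intros t Ht. destruct (Hf t Ht) as [H1 [H2 H3]].
  split; [apply (is_derive_opp _ _ _ H1) | split; [apply (is_derive_opp _ _ _ H2) | lra]].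
Qed.

Definition sym_diff2_le (psi : R -> R) (s0 K : R) : Prop :=
  forall eta, 0 < eta -> exists del, 0 < del /\ forall h, Rabs h < del ->
    psi (s0 + h) + psi (s0 - h) - 2 * psi s0 <= (K + eta) * h ^ 2.

Lemma Rabs_lt_Rmin (h a b : R) : Rabs h < Rmin a b -> Rabs h < a /\ Rabs h < b.
Proof. intro H. split; eapply Rlt_le_trans; [exact H | apply Rmin_l | exact H | apply Rmin_r]. Qed.

Lemma Rabs_scale_le (beta h : R) : beta ^ 2 <= 1 -> Rabs (beta * h) <= Rabs h.
Proof.
  intro Hb. assert (Hb1 : Rabs beta <= 1).
  { rewrite <- Rabs_R1. apply Rsqr_le_abs_0. unfold Rsqr. nra. }
  rewrite Rabs_mult. pose proof (Rabs_pos beta). pose proof (Rabs_pos h). nra.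
Qed.

Lemma f2_near_bounds (f f1 f2 : R -> R) (s0 d eta : R) :
  0 < d -> 0 < eta ->
  (forall t, Rabs (t - s0) < d -> is_derive f t (f1 t) /\ is_derive f1 t (f2 t)) ->
  continuity_pt f2 s0 ->
  exists d', 0 < d' /\ forall t, Rabs (t - s0) < d' ->
    is_derive f t (f1 t) /\ is_derive f1 t (f2 t) /\ Rabs (f2 t - f2 s0) < eta.
Proof.
  intros Hd Heta Hf Hc. destruct (continuity_pt_ball f2 s0 Hc eta Heta) as [d1 [Hd1 Hc1]].
  exists (Rmin d d1). split; [now apply Rmin_pos|].
  intros t Ht. apply Rabs_lt_Rmin in Ht as [Ht Ht1].
  destruct (Hf t Ht) as [H1 H2]. auto.
Qed.

Lemma sym_diff2_le_of_derive2 (f f1 f2 : R -> R) (s0 d : R) : 0 < d ->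
  (forall t, Rabs (t - s0) < d -> is_derive f t (f1 t) /\ is_derive f1 t (f2 t)) ->
  continuity_pt f2 s0 -> sym_diff2_le f s0 (f2 s0).
Proof.
  intros Hd Hf Hc eta Heta.
  destruct (f2_near_bounds f f1 f2 s0 d eta Hd Heta Hf Hc) as [d' [Hd' Hnear]].
  exists d'. split; [exact Hd'|]. intros h Hh.
  assert (Hup : forall h, Rabs h < d' ->
            f (s0 + h) <= f s0 + f1 s0 * h + (f2 s0 + eta) * h ^ 2 / 2).
  { apply (taylor_upper f f1 f2). intros t Ht. destruct (Hnear t Ht) as [H1 [H2 H3]].
    apply Rabs_def2 in H3. split; [exact H1 | split; [exact H2 | lra]]. }
  assert (E1 := Hup h Hh). assert (E2 := Hup (- h) ltac:(now rewrite Rabs_Ropp)).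
  replace (s0 + - h) with (s0 - h) in E2 by ring. lra.
Qed.

Lemma derive2_le_at_local_max (f f1 f2 psi : R -> R) (s0 d K : R) : 0 < d ->
  (forall t, Rabs (t - s0) < d -> is_derive f t (f1 t) /\ is_derive f1 t (f2 t)) ->
  continuity_pt f2 s0 ->
  (forall h, Rabs h < d -> f (s0 + h) - f s0 <= psi (s0 + h) - psi s0) ->
  sym_diff2_le psi s0 K -> f2 s0 <= K.
Proof.
  intros Hd Hf Hc Hmax Hpsi.
  destruct (Rle_or_lt (f2 s0) K) as [|Hlt]; [assumption | exfalso].
  set (eta := (f2 s0 - K) / 3).
  destruct (Hpsi eta ltac:(unfold eta; lra)) as [d1 [Hd1 Hpsi1]].
  destruct (f2_near_bounds f f1 f2 s0 d eta Hd ltac:(unfold eta; lra) Hf Hc) as [d2 [Hd2 Hnear]].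
  assert (Hlow : forall h, Rabs h < d2 ->
            f s0 + f1 s0 * h + (f2 s0 - eta) * h ^ 2 / 2 <= f (s0 + h)).
  { apply (taylor_lower f f1 f2). intros t Ht. destruct (Hnear t Ht) as [H1 [H2 H3]].
    apply Rabs_def2 in H3. split; [exact H1 | split; [exact H2 | lra]]. }
  set (h := Rmin d (Rmin d1 d2) / 2).
  assert (Hm : 0 < Rmin d (Rmin d1 d2)) by (repeat apply Rmin_pos; assumption).
  assert (Hh : Rabs h < Rmin d (Rmin d1 d2)) by (unfold h; rewrite Rabs_pos_eq; lra).
  assert (Hh' : Rabs (- h) < Rmin d (Rmin d1 d2)) by (now rewrite Rabs_Ropp).
  apply Rabs_lt_Rmin in Hh as [Hh [Hh1 Hh2]%Rabs_lt_Rmin].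
  apply Rabs_lt_Rmin in Hh' as [Hh' [_ Hh2']%Rabs_lt_Rmin].
  assert (E1 := Hlow h Hh2). assert (E2 := Hlow (- h) Hh2').
  assert (M1 := Hmax h Hh). assert (M2 := Hmax (- h) Hh').
  assert (P := Hpsi1 h Hh1).
  replace (s0 + - h) with (s0 - h) in E2, M2 by ring.
  assert (Hpos : 0 < h ^ 2) by (apply pow_lt; unfold h; lra).
  assert (Hcoef : (f2 s0 - eta) * h ^ 2 <= (K + eta) * h ^ 2) by lra.
  apply Rmult_le_reg_r in Hcoef; [unfold eta in Hcoef; lra | exact Hpos].
Qed.

Lemma laplacian_le_at_axis_max (u psi : R -> R -> R) (xs ys d Kx Ky : R) :
  C2_on open_half u -> 0 < d -> d <= xs ->
  (forall h, Rabs h < d -> u (xs + h) ys - u xs ys <= psi (xs + h) ys - psi xs ys) ->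
  (forall h, Rabs h < d -> u xs (ys + h) - u xs ys <= psi xs (ys + h) - psi xs ys) ->
  sym_diff2_le (fun t => psi t ys) xs Kx -> sym_diff2_le (fun t => psi xs t) ys Ky ->
  laplacian u xs ys <= Kx + Ky.
Proof.
  intros HC Hd Hdx Hmx Hmy Hpx Hpy.
  assert (Hs : open_half xs ys) by (unfold open_half; lra).
  destruct (HC xs ys Hs) as (_ & _ & _ & _ & _ & _ & _ & _ & _ & C11 & _ & _ & C22).
  unfold laplacian. apply Rplus_le_compat.
  - apply (derive2_le_at_local_max (fun t => u t ys) (fun t => D1 u t ys)
             (fun t => D1 (D1 u) t ys) (fun t => psi t ys) xs d); auto.
    + intros t Ht. assert (Ht' : open_half t ys) by (unfold open_half; apply Rabs_def2 in Ht; lra).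
      destruct (HC t ys Ht') as (E1 & _ & E3 & _). split; now apply Derive_correct.
    + now apply cont2_slice_x.
  - apply (derive2_le_at_local_max (fun t => u xs t) (fun t => D2 u xs t)
             (fun t => D2 (D2 u) xs t) (fun t => psi xs t) ys d); auto.
    + intros t _. destruct (HC xs t Hs) as (_ & E2 & _ & _ & _ & E6 & _).
      split; now apply Derive_correct.
    + now apply cont2_slice_y.
Qed.

(** * Maxima on compact rectangles *)

Definition clamp (a b x : R) : R := Rmax a (Rmin b x).

Lemma clamp_in (a b x : R) : a <= b -> a <= clamp a b x <= b.
Proof. intros. unfold clamp, Rmax, Rmin. repeat destruct Rle_dec; lra. Qed.

Lemma clamp_id (a b x : R) : a <= x <= b -> clamp a b x = x.
Proof. intros. unfold clamp, Rmax, Rmin. repeat destruct Rle_dec; lra. Qed.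

Lemma clamp_lipschitz (a b x x' : R) :
  a <= b -> Rabs (clamp a b x' - clamp a b x) <= Rabs (x' - x).
Proof. intros. unfold clamp, Rmax, Rmin. repeat destruct Rle_dec; split_Rabs; lra. Qed.

Lemma rectangle_max (f : R -> R -> R) (a b c d : R) : a <= b -> c <= d ->
  (forall x y, a <= x <= b -> c <= y <= d -> continuity_2d_pt f x y) ->
  exists x0 y0, a <= x0 <= b /\ c <= y0 <= d /\
    forall x y, a <= x <= b -> c <= y <= d -> f x y <= f x0 y0.
Proof.
  intros Hab Hcd Hf.
  destruct (choice (fun x y => c <= y <= d /\
              forall y', c <= y' <= d -> f (clamp a b x) y' <= f (clamp a b x) y))
    as [Y HY].
  { intro x. destruct (continuity_ab_maj (f (clamp a b x)) c d Hcd) as [My [HMy HMyin]].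
    2: { exists My. split; assumption. }
    intros y Hy. apply continuity_pt_of_ball. intros eps He.
    destruct (Hf (clamp a b x) y (clamp_in a b x Hab) Hy (mkposreal eps He)) as [del Hdel].
    exists del; split; [apply cond_pos|]. intros t Ht. apply Hdel; [|exact Ht].
    rewrite Rminus_diag, Rabs_R0. apply cond_pos. }
  destruct (continuity_ab_maj (fun x => f (clamp a b x) (Y x)) a b Hab) as [Mx [HM HMx]].
  { intros x _. apply continuity_pt_of_ball. intros eps He.
    destruct (uniform_continuity_2d f a b c d) with (eps := mkposreal eps He) as [del Hdel].
    { intros; apply Hf; assumption. }
    exists del; split; [apply cond_pos|]. intros t Ht.
    assert (Hcl := clamp_lipschitz a b x t Hab).
    destruct (HY x) as [Yx HYx], (HY t) as [Yt HYt].
    assert (A1 : Rabs (f (clamp a b t) (Y x) - f (clamp a b x) (Y x)) < eps).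
    { apply Hdel; auto using clamp_in; [lra|]. rewrite Rminus_diag, Rabs_R0. apply cond_pos. }
    assert (A2 : Rabs (f (clamp a b x) (Y t) - f (clamp a b t) (Y t)) < eps).
    { apply Hdel; auto using clamp_in; [rewrite Rabs_minus_sym; lra|].
      rewrite Rminus_diag, Rabs_R0. apply cond_pos. }
    assert (B1 := HYt (Y x) Yx). assert (B2 := HYx (Y t) Yt).
    apply Rabs_def2 in A1, A2. apply Rabs_def1; lra. }
  exists Mx, (Y Mx). destruct (HY Mx) as [HYM _]. repeat split; try apply HMx; try apply HYM.
  intros x y Hx Hy. destruct (HY x) as [_ HYx].
  assert (H1 := HM x Hx). assert (H2 := HYx y Hy). cbn beta in H1.
  rewrite clamp_id in H1, H2 by assumption. rewrite (clamp_id a b Mx HMx) in H1. lra.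
Qed.

Lemma finite_family_max (n : nat) (P : nat -> R -> R -> Prop) (G : nat -> R -> R -> R) :
  (1 <= n)%nat ->
  (forall k, (k < n)%nat -> exists x y, P k x y /\
     forall x' y', P k x' y' -> G k x' y' <= G k x y) ->
  exists k x y, (k < n)%nat /\ P k x y /\
    forall k', (k' < n)%nat -> forall x' y', P k' x' y' -> G k' x' y' <= G k x y.
Proof.
  induction n as [|n IH]; intros Hn Hk; [lia|].
  destruct (Hk n ltac:(lia)) as (xn & yn & Pn & Mn).
  destruct (Nat.eq_dec n 0) as [->|Hn0].
  { exists 0%nat, xn, yn. repeat split; [lia | exact Pn |].
    intros k' Hk'. replace k' with 0%nat by lia. exact Mn. }
  destruct (IH ltac:(lia) ltac:(intros k Hk'; apply Hk; lia)) as (k & x & y & Hkn & Pk & Mk).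
  destruct (Rle_or_lt (G n xn yn) (G k x y)) as [Hle|Hlt].
  - exists k, x, y. repeat split; [lia | exact Pk |]. intros k' Hk' x' y' P'.
    destruct (Nat.eq_dec k' n) as [->|Hne].
    + eapply Rle_trans; [apply Mn, P' | exact Hle].
    + apply Mk; [lia | exact P'].
  - exists n, xn, yn. repeat split; [lia | exact Pn |]. intros k' Hk' x' y' P'.
    destruct (Nat.eq_dec k' n) as [->|Hne]; [apply Mn, P'|].
    eapply Rle_trans; [apply Mk; [lia | exact P'] | lra].
Qed.

Lemma finite_upper_bound (f : nat -> R) (n : nat) :
  exists K, 0 <= K /\ forall i, (i < n)%nat -> f i <= K.
Proof.
  induction n as [|n [K [HK0 HK]]].
  - exists 0. split; [lra | intros; lia].
  - exists (Rmax K (f n)). split; [eapply Rle_trans; [exact HK0 | apply Rmax_l]|].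
    intros i Hi. destruct (Nat.eq_dec i n) as [->|Hne]; [apply Rmax_r|].
    eapply Rle_trans; [apply HK; lia | apply Rmax_l].
Qed.

(** * The nonlinearity and the Keller-Osserman bound *)

Lemma exp_le_compat (a b : R) : a <= b -> exp a <= exp b.
Proof. intros [H | ->]; [left; now apply exp_increasing | right; reflexivity]. Qed.

Definition F (s : R) : R := 2 * exp s - 2 * exp (-2 * s).

Lemma F_add_ge (a t : R) : 0 <= a -> 0 <= t -> F a + 2 * t <= F (a + t).
Proof.
  intros Ha Ht. unfold F.
  rewrite exp_plus. replace (-2 * (a + t)) with (-2 * a + -2 * t) by ring. rewrite exp_plus.
  assert (1 + t <= exp t) by apply exp_ineq1_le.
  assert (1 <= exp a) by (rewrite <- exp_0; apply exp_le_compat; lra).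
  assert (exp (-2 * t) <= 1) by (rewrite <- exp_0; apply exp_le_compat; lra).
  assert (0 < exp (-2 * a)) by apply exp_pos.
  assert (0 < exp (-2 * t)) by apply exp_pos.
  nra.
Qed.

Lemma F_nonneg (s : R) : 0 <= s -> 0 <= F s.
Proof.
  intro Hs. assert (H := F_add_ge 0 s (Rle_refl 0) Hs).
  unfold F at 1 in H. rewrite Rmult_0_r, exp_0, Rplus_0_l in H. lra.
Qed.

Lemma F_ge_quadratic (s : R) : 0 <= s -> 6 * s - 3 * s ^ 2 <= F s.
Proof.
  intro Hs. unfold F.
  assert (Htaylor : forall x, 0 <= x -> 1 + x + x ^ 2 / 2 + x ^ 3 / 6 <= exp x).
  { intros x Hx. pose proof (exp_ge_taylor x 3 Hx) as H. simpl in H. lra. }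
  assert (H1 := Htaylor s Hs). assert (H2 := Htaylor (2 * s) ltac:(lra)).
  set (p := 1 + 2 * s + (2 * s) ^ 2 / 2 + (2 * s) ^ 3 / 6) in *.
  set (w := 2 - 4 * s + 4 * s ^ 2 + s ^ 3 / 3).
  assert (Hp : 0 < p) by (unfold p; nra).
  assert (Hwp : 2 <= w * p).
  { unfold w, p. assert (0 <= s ^ 3) by (apply pow_le; lra).
    assert (0 <= s ^ 4) by (apply pow_le; lra). assert (0 <= s ^ 5) by (apply pow_le; lra).
    assert (0 <= s ^ 6) by (apply pow_le; lra). nra. }
  replace (-2 * s) with (- (2 * s)) by ring. rewrite exp_Ropp.
  assert (/ exp (2 * s) <= / p) by (apply Rinv_le_contravar; lra).
  assert (/ p <= w / 2) by (apply (Rmult_le_reg_r p); [exact Hp | field_simplify; lra]).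
  unfold w in *. lra.
Qed.

Lemma laplacian_eq_F (u : R -> R -> R) (x y : R) :
  gauss_curv u x y = -1 + phi_norm2 u x y -> laplacian u x y = F (u x y).
Proof.
  unfold gauss_curv, phi_norm2, F. set (v := u x y). set (L := laplacian u x y). intro H.
  assert (E1 : exp (- v) * exp v = 1) by (rewrite <- exp_plus, Rplus_opp_l; apply exp_0).
  assert (E2 : exp (-3 * v) * exp v = exp (-2 * v)) by (rewrite <- exp_plus; f_equal; ring).
  transitivity (-2 * exp v * (- / 2 * exp (- v) * L)).
  - transitivity (L * (exp (- v) * exp v)); [rewrite E1; ring | field].
  - rewrite H, <- E2. ring.
Qed.

Lemma nonneg_of_curvature (u : R -> R -> R) (x y : R) :
  gauss_curv u x y = -1 + phi_norm2 u x y -> gauss_curv u x y <= 0 -> 0 <= u x y.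
Proof.
  unfold phi_norm2. intros Heq Hle. rewrite Heq in Hle.
  destruct (Rle_or_lt 0 (u x y)) as [|Hneg]; [assumption|].
  assert (exp 0 < exp (-3 * u x y)) by (apply exp_increasing; lra).
  rewrite exp_0 in *. lra.
Qed.

Lemma barrier_slice_sym_diff2 (c Z s0 : R) :
  let w t := 1 - (t - c) ^ 2 - Z ^ 2 in
  0 < w s0 ->
  sym_diff2_le (fun t => ln 8 - 2 * ln (w t)) s0
    (4 / w s0 + 8 * (s0 - c) ^ 2 / w s0 ^ 2).
Proof.
  intros w Hw.
  assert (Hwc : continuity_pt w s0).
  { apply (continuity_pt_of_is_derive _ _ (-2 * (s0 - c))).
    unfold w. auto_derive; [exact I | ring]. }
  destruct (continuity_pt_ball w s0 Hwc (w s0) Hw) as [d [Hd Hnear]].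
  assert (Hpos : forall t, Rabs (t - s0) < d -> 0 < w t).
  { intros t Ht. apply Hnear, Rabs_def2 in Ht. lra. }
  apply (sym_diff2_le_of_derive2 _ (fun t => 4 * (t - c) / w t)
           (fun t => 4 / w t + 8 * (t - c) ^ 2 / w t ^ 2) s0 d Hd).
  - intros t Ht. assert (Ht' := Hpos t Ht). unfold w in *.
    split; (auto_derive; [lra | field; lra]).
  - apply (continuity_pt_of_is_derive _ _
             (Derive (fun t => 4 / w t + 8 * (t - c) ^ 2 / w t ^ 2) s0)).
    apply Derive_correct. unfold w in *. auto_derive. repeat split; intro; nra.
Qed.

Lemma F_barrier_ge (W : R) : 0 < W <= 1 -> 8 / W ^ 2 <= F (ln 8 - 2 * ln W).
Proof.
  intros HW. set (E := exp (ln 8 - 2 * ln W)).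
  assert (HE : E = 8 / W ^ 2).
  { unfold E, Rminus. rewrite exp_plus, exp_ln by lra.
    replace (- (2 * ln W)) with (- (ln W + ln W)) by ring.
    rewrite exp_Ropp, exp_plus, exp_ln by lra. field. lra. }
  assert (HE8 : 8 <= E)
    by (rewrite HE; apply (Rmult_le_reg_r (W ^ 2)); [nra | field_simplify; nra]).
  assert (HF : F (ln 8 - 2 * ln W) = 2 * E - 2 / (E * E)).
  { unfold F, E.
    replace (-2 * (ln 8 - 2 * ln W)) with (- ((ln 8 - 2 * ln W) + (ln 8 - 2 * ln W))) by ring.
    rewrite exp_Ropp, exp_plus. field. apply Rgt_not_eq, exp_pos. }
  assert (2 / (E * E) <= E) by (apply (Rmult_le_reg_r (E * E)); [nra | field_simplify; nra]).
  lra.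
Qed.

Lemma sym_diff2_le_ext (f g : R -> R) (s0 K : R) :
  (forall t, f t = g t) -> sym_diff2_le f s0 K -> sym_diff2_le g s0 K.
Proof.
  intros Hfg H eta Heta. destruct (H eta Heta) as [d [Hd Hf]].
  exists d. split; [exact Hd|]. intros h Hh. rewrite <- !Hfg. apply Hf, Hh.
Qed.

Lemma cont2_2d (f : R -> R -> R) (x y : R) : cont2 f x y -> continuity_2d_pt f x y.
Proof. apply continuity_2d_pt_filterlim. Qed.

Definition disk_weight (x0 y0 x y : R) : R := 1 - (x - x0) ^ 2 - (y - y0) ^ 2.
Definition disk_barrier (x0 y0 x y : R) : R := ln 8 - 2 * ln (disk_weight x0 y0 x y).

Lemma disk_weight_pos (x0 y0 x y : R) : 0 < disk_weight x0 y0 x y ->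
  Rabs (x - x0) < 1 /\ Rabs (y - y0) < 1.
Proof.
  unfold disk_weight. intro H. assert (0 <= (x - x0) ^ 2) by apply pow2_ge_0.
  assert (0 <= (y - y0) ^ 2) by apply pow2_ge_0. split; split_Rabs; nra.
Qed.

Lemma disk_weight_le_1 (x0 y0 x y : R) : disk_weight x0 y0 x y <= 1.
Proof.
  unfold disk_weight. pose proof (pow2_ge_0 (x - x0)). pose proof (pow2_ge_0 (y - y0)). lra.
Qed.

Lemma disk_weight_shift (W q a h d : R) : Rabs a < 1 -> Rabs h < d -> d <= 1 ->
  d <= (W - q) / 3 -> q < W - 2 * a * h - h ^ 2.
Proof. intros Ha Hh Hd1 Hd. split_Rabs; nra. Qed.

Lemma disk_weight_continuous (x0 y0 x y : R) : continuity_2d_pt (disk_weight x0 y0) x y.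
Proof.
  apply continuity_2d_pt_ext with
    (f := fun x y => 1 - (x - x0) * (x - x0) - (y - y0) * (y - y0));
    [intros; unfold disk_weight; ring|].
  repeat first [ apply continuity_2d_pt_minus | apply continuity_2d_pt_mult
               | apply continuity_2d_pt_const | apply continuity_2d_pt_id1
               | apply continuity_2d_pt_id2 ].
Qed.

Lemma truncated_barrier_continuous (x0 y0 q x y : R) : 0 < q ->
  continuity_2d_pt (fun x y => ln 8 - 2 * ln (Rmax (disk_weight x0 y0 x y) q)) x y.
Proof.
  intro Hq.
  apply (continuity_1d_2d_pt_comp (fun z => ln 8 - 2 * ln (Rmax z q)) (disk_weight x0 y0));
    [|apply disk_weight_continuous].
  apply (continuity_pt_comp (fun z => Rmax z q) (fun w => ln 8 - 2 * ln w)).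
  - apply continuity_pt_Rmax_const.
  - assert (0 < Rmax (disk_weight x0 y0 x y) q) by (eapply Rlt_le_trans; [exact Hq | apply Rmax_r]).
    apply (continuity_pt_of_is_derive _ _ (-2 / Rmax (disk_weight x0 y0 x y) q)).
    auto_derive; [lra | field; lra].
Qed.

Lemma disk_barrier_touching_point (u : R -> R -> R) (x0 y0 : R) :
  (forall x y, x0 - 1 <= x <= x0 + 1 -> y0 - 1 <= y <= y0 + 1 -> continuity_2d_pt u x y) ->
  ln 8 < u x0 y0 ->
  exists q xs ys, 0 < q /\ q < disk_weight x0 y0 xs ys /\
    0 < u xs ys - disk_barrier x0 y0 xs ys /\
    forall x y, q < disk_weight x0 y0 x y ->
      u x y - disk_barrier x0 y0 x y <= u xs ys - disk_barrier x0 y0 xs ys.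
Proof.
  intros Hc Hu0.
  destruct (rectangle_max u (x0 - 1) (x0 + 1) (y0 - 1) (y0 + 1)) as (xm & ym & _ & _ & HM);
    [lra | lra | exact Hc |].
  set (M := u xm ym) in *. assert (HuM : u x0 y0 <= M) by (apply HM; lra).
  (* At the level [q] the truncated barrier equals [M >= u], so [u - V] cannot peak
     where [disk_weight <= q]. *)
  set (q := exp ((ln 8 - M) / 2)).
  assert (Hq : 0 < q) by apply exp_pos.
  assert (Hlnq : ln 8 - 2 * ln q = M) by (unfold q; rewrite ln_exp; field).
  set (V x y := ln 8 - 2 * ln (Rmax (disk_weight x0 y0 x y) q)).
  assert (HV : forall x y, q < disk_weight x0 y0 x y -> V x y = disk_barrier x0 y0 x y).
  { intros x y Hw. unfold V, disk_barrier. now rewrite Rmax_left by lra. }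
  assert (HinQ : forall x y, q < disk_weight x0 y0 x y ->
            x0 - 1 <= x <= x0 + 1 /\ y0 - 1 <= y <= y0 + 1).
  { intros x y Hw. destruct (disk_weight_pos x0 y0 x y ltac:(lra)) as [Hx Hy].
    split_Rabs; lra. }
  destruct (rectangle_max (fun x y => u x y - V x y) (x0 - 1) (x0 + 1) (y0 - 1) (y0 + 1))
    as (xs & ys & Hxs & Hys & Hmax); [lra | lra | |].
  { intros x y Hx Hy. apply continuity_2d_pt_minus; [now apply Hc |].
    now apply truncated_barrier_continuous. }
  assert (Hq1 : q < 1).
  { unfold q. rewrite <- exp_0. apply exp_increasing. lra. }
  assert (HV0 : V x0 y0 = ln 8).
  { unfold V, disk_weight. rewrite !Rminus_diag, Rmax_left by (simpl; lra).
    replace (1 - 0 ^ 2 - 0 ^ 2) with 1 by ring. rewrite ln_1. ring. }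
  assert (Hpos : 0 < u xs ys - V xs ys).
  { assert (u x0 y0 - V x0 y0 <= u xs ys - V xs ys) by (apply Hmax; lra). lra. }
  assert (HWs : q < disk_weight x0 y0 xs ys).
  { destruct (Rlt_or_le q (disk_weight x0 y0 xs ys)) as [|Hle]; [assumption | exfalso].
    assert (V xs ys = M) by (unfold V; now rewrite Rmax_right).
    assert (u xs ys <= M) by (apply HM; assumption). lra. }
  exists q, xs, ys. rewrite <- HV by exact HWs. repeat split; try assumption.
  intros x y Hw. rewrite <- HV by exact Hw. destruct (HinQ x y Hw). now apply Hmax.
Qed.

Lemma laplacian_le_at_disk_barrier_max (u : R -> R -> R) (x0 y0 q xs ys : R) :
  C2_on open_half u -> 1 <= x0 -> 0 < q -> q < disk_weight x0 y0 xs ys ->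
  (forall x y, q < disk_weight x0 y0 x y ->
     u x y - disk_barrier x0 y0 x y <= u xs ys - disk_barrier x0 y0 xs ys) ->
  laplacian u xs ys <= 8 / disk_weight x0 y0 xs ys ^ 2.
Proof.
  intros HC Hx0 Hq HWs Hmax.
  destruct (disk_weight_pos x0 y0 xs ys ltac:(lra)) as [Hax Hay].
  set (Ws := disk_weight x0 y0 xs ys) in *.
  set (d := Rmin xs (Rmin 1 ((Ws - q) / 3))).
  assert (Hd : 0 < d) by (unfold d; repeat apply Rmin_pos; split_Rabs; lra).
  assert (Hd1 : d <= 1) by (eapply Rle_trans; [apply Rmin_r | apply Rmin_l]).
  assert (Hd3 : d <= (Ws - q) / 3) by (eapply Rle_trans; [apply Rmin_r | apply Rmin_r]).
  assert (Hsum : (xs - x0) ^ 2 + (ys - y0) ^ 2 = 1 - Ws) by (unfold Ws, disk_weight; ring).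
  replace (8 / Ws ^ 2) with
    ((4 / Ws + 8 * (xs - x0) ^ 2 / Ws ^ 2) + (4 / Ws + 8 * (ys - y0) ^ 2 / Ws ^ 2)).
  2: { replace (8 / Ws ^ 2) with (8 / Ws + 8 * (1 - Ws) / Ws ^ 2) by (field; lra).
       rewrite <- Hsum. field. lra. }
  apply (laplacian_le_at_axis_max u (disk_barrier x0 y0) xs ys d); try apply Rmin_l; auto.
  - intros h Hh. enough (u (xs + h) ys - disk_barrier x0 y0 (xs + h) ys <=
                         u xs ys - disk_barrier x0 y0 xs ys) by lra.
    apply Hmax. unfold disk_weight in *.
    replace (1 - (xs + h - x0) ^ 2 - (ys - y0) ^ 2) with (Ws - 2 * (xs - x0) * h - h ^ 2)
      by (unfold Ws; ring).
    now apply (disk_weight_shift Ws q (xs - x0) h d).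
  - intros h Hh. enough (u xs (ys + h) - disk_barrier x0 y0 xs (ys + h) <=
                         u xs ys - disk_barrier x0 y0 xs ys) by lra.
    apply Hmax. unfold disk_weight in *.
    replace (1 - (xs - x0) ^ 2 - (ys + h - y0) ^ 2) with (Ws - 2 * (ys - y0) * h - h ^ 2)
      by (unfold Ws; ring).
    now apply (disk_weight_shift Ws q (ys - y0) h d).
  - apply (barrier_slice_sym_diff2 x0 (ys - y0) xs). unfold Ws, disk_weight in *. lra.
  - apply (sym_diff2_le_ext (fun t => ln 8 - 2 * ln (1 - (t - y0) ^ 2 - (xs - x0) ^ 2)));
      [intro t; unfold disk_barrier, disk_weight; do 3 f_equal; ring|].
    replace Ws with (1 - (ys - y0) ^ 2 - (xs - x0) ^ 2) by (unfold Ws, disk_weight; ring).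
    apply (barrier_slice_sym_diff2 y0 (xs - x0) ys). unfold Ws, disk_weight in *. lra.
Qed.

Lemma keller_osserman_bound (u : R -> R -> R) :
  (forall x y, 0 <= x -> cont2 u x y) -> C2_on open_half u ->
  (forall x y, 0 < x -> laplacian u x y = F (u x y)) ->
  forall x0 y0, 1 <= x0 -> u x0 y0 <= ln 8.
Proof.
  intros Hc HC Hl x0 y0 Hx0.
  destruct (Rle_or_lt (u x0 y0) (ln 8)) as [|Hu0]; [assumption | exfalso].
  destruct (disk_barrier_touching_point u x0 y0) as (q & xs & ys & Hq & HWs & Hpos & Hmax);
    [intros x y Hx _; apply cont2_2d, Hc; lra | exact Hu0 |].
  assert (Hlap := laplacian_le_at_disk_barrier_max u x0 y0 q xs ys HC Hx0 Hq HWs Hmax).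
  assert (HWs1 := disk_weight_le_1 x0 y0 xs ys).
  assert (Hxs : 0 < xs).
  { destruct (disk_weight_pos x0 y0 xs ys ltac:(lra)). split_Rabs; lra. }
  assert (Hbar : 8 / disk_weight x0 y0 xs ys ^ 2 <= F (disk_barrier x0 y0 xs ys))
    by (apply F_barrier_ge; lra).
  assert (Hbar0 : 0 <= disk_barrier x0 y0 xs ys).
  { unfold disk_barrier.
    assert (ln (disk_weight x0 y0 xs ys) <= 0) by (rewrite <- ln_1; apply ln_le; lra).
    assert (0 < ln 8) by (rewrite <- ln_1; apply ln_increasing; lra). lra. }
  assert (Hinc := F_add_ge _ _ Hbar0 (Rlt_le _ _ Hpos)).
  rewrite Rplus_minus, <- (Hl xs ys Hxs) in Hinc. lra.
Qed.

(** * Distance to a boundary segment *)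

Definition interval_dist (b c y : R) : R := Rmax 0 (Rmax (y - b) (c - y)).
Definition segment_dist (b c x y : R) : R := sqrt (x ^ 2 + interval_dist b c y ^ 2).

Lemma interval_dist_nonneg (b c y : R) : 0 <= interval_dist b c y.
Proof. apply Rmax_l. Qed.

Lemma interval_dist_above (b c y : R) : c <= b -> b <= y -> interval_dist b c y = y - b.
Proof. intros. unfold interval_dist, Rmax. repeat destruct Rle_dec; lra. Qed.

Lemma interval_dist_below (b c y : R) : c <= b -> y <= c -> interval_dist b c y = c - y.
Proof. intros. unfold interval_dist, Rmax. repeat destruct Rle_dec; lra. Qed.

Lemma interval_dist_inside (b c y : R) : c <= y <= b -> interval_dist b c y = 0.
Proof. intros. unfold interval_dist, Rmax. repeat destruct Rle_dec; lra. Qed.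

Lemma interval_dist_pos_cases (b c y : R) : c <= b -> 0 < interval_dist b c y ->
  (b <= y /\ interval_dist b c y = y - b) \/ (y <= c /\ interval_dist b c y = c - y).
Proof. intros. unfold interval_dist, Rmax in *. repeat destruct Rle_dec; lra. Qed.

Lemma interval_dist_ge (b c y : R) : y - b <= interval_dist b c y /\ c - y <= interval_dist b c y.
Proof. unfold interval_dist, Rmax. repeat destruct Rle_dec; lra. Qed.

Lemma interval_dist_lipschitz (b c y y' : R) :
  Rabs (interval_dist b c y' - interval_dist b c y) <= Rabs (y' - y).
Proof. unfold interval_dist, Rmax. repeat destruct Rle_dec; split_Rabs; lra. Qed.

Lemma segment_dist_sq (b c x y : R) : segment_dist b c x y ^ 2 = x ^ 2 + interval_dist b c y ^ 2.
Proof.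
  unfold segment_dist. apply pow2_sqrt.
  pose proof (pow2_ge_0 x). pose proof (pow2_ge_0 (interval_dist b c y)). lra.
Qed.

Lemma segment_dist_nonneg (b c x y : R) : 0 <= segment_dist b c x y.
Proof. apply sqrt_pos. Qed.

Lemma segment_dist_ge (b c x y : R) : 0 <= x ->
  x <= segment_dist b c x y /\ interval_dist b c y <= segment_dist b c x y.
Proof.
  intro Hx. assert (H1 := segment_dist_sq b c x y). assert (H2 := segment_dist_nonneg b c x y).
  assert (H3 := interval_dist_nonneg b c y).
  pose proof (pow2_ge_0 x). pose proof (pow2_ge_0 (interval_dist b c y)). split; nra.
Qed.

Lemma segment_dist_on_axis (b c y : R) : segment_dist b c 0 y = interval_dist b c y.
Proof.
  unfold segment_dist.
  replace (0 ^ 2 + interval_dist b c y ^ 2) with (interval_dist b c y ^ 2) by ring.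
  apply sqrt_pow2, interval_dist_nonneg.
Qed.

Lemma segment_dist_continuous (b c x y : R) : continuity_2d_pt (segment_dist b c) x y.
Proof.
  unfold segment_dist.
  apply (continuity_1d_2d_pt_comp sqrt (fun x y => x ^ 2 + interval_dist b c y ^ 2)).
  - apply continuity_pt_sqrt.
    pose proof (pow2_ge_0 x). pose proof (pow2_ge_0 (interval_dist b c y)). lra.
  - apply continuity_2d_pt_ext with
      (f := fun x y => x * x + interval_dist b c y * interval_dist b c y);
      [intros; simpl; ring|].
    assert (Hd : continuity_2d_pt (fun _ v => interval_dist b c v) x y).
    { apply (continuity_1d_2d_pt_comp (interval_dist b c) (fun _ v => v));
        [apply continuity_pt_of_lipschitz; intro; apply interval_dist_lipschitz
        | apply continuity_2d_pt_id2]. }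
    apply continuity_2d_pt_plus; apply continuity_2d_pt_mult;
      solve [apply continuity_2d_pt_id1 | exact Hd].
Qed.

(* A distance function lies between its tangent line and a parabola whose opening
   [1 / r s0] bounds the curvature of its level sets. *)
Definition tangent_sandwich (r : R -> R) (s0 beta : R) : Prop :=
  forall h, r s0 + beta * h <= r (s0 + h) <= r s0 + beta * h + h ^ 2 / (2 * r s0).

Lemma root_tangent_bounds (rho0 gam rh h : R) :
  0 < rho0 -> gam ^ 2 <= rho0 ^ 2 -> 0 <= rh ->
  rho0 ^ 2 + gam * h <= rh * rho0 -> rh ^ 2 <= rho0 ^ 2 + 2 * gam * h + h ^ 2 ->
  rho0 + gam / rho0 * h <= rh <= rho0 + gam / rho0 * h + h ^ 2 / (2 * rho0).
Proof.
  intros Hr Hg Hrh H1 H2. split.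
  - apply (Rmult_le_reg_r rho0); [exact Hr|].
    replace ((rho0 + gam / rho0 * h) * rho0) with (rho0 ^ 2 + gam * h) by (field; lra). lra.
  - set (Rt := rho0 + gam / rho0 * h + h ^ 2 / (2 * rho0)).
    assert (Hgh : Rabs (gam * h) <= rho0 * Rabs h).
    { rewrite Rabs_mult. apply Rmult_le_compat_r; [apply Rabs_pos|].
      rewrite <- (Rabs_pos_eq rho0) by lra. apply Rsqr_le_abs_0. unfold Rsqr. nra. }
    assert (Hq : 0 <= rho0 ^ 2 + 2 * gam * h + h ^ 2) by (split_Rabs; nra).
    assert (HR0 : 0 <= Rt).
    { apply (Rmult_le_reg_r (2 * rho0)); [lra|].
      replace (Rt * (2 * rho0)) with (rho0 ^ 2 + (rho0 ^ 2 + 2 * gam * h + h ^ 2))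
        by (unfold Rt; field; lra). nra. }
    assert (HR2 : Rt ^ 2 =
      rho0 ^ 2 + 2 * gam * h + h ^ 2 + (gam / rho0 * h + h ^ 2 / (2 * rho0)) ^ 2)
      by (unfold Rt; field; lra).
    pose proof (pow2_ge_0 (gam / rho0 * h + h ^ 2 / (2 * rho0))). nra.
Qed.

Lemma cauchy_schwarz2 (a b c d : R) : a * c + b * d <= sqrt (a ^ 2 + b ^ 2) * sqrt (c ^ 2 + d ^ 2).
Proof. pose proof (sqrt_cauchy a b c d). unfold Rsqr in H. simpl. rewrite !Rmult_1_r. exact H. Qed.

Lemma segment_dist_slice_x (b c x0 y0 : R) : 0 < segment_dist b c x0 y0 ->
  tangent_sandwich (fun t => segment_dist b c t y0) x0 (x0 / segment_dist b c x0 y0).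
Proof.
  intros Hr h. apply root_tangent_bounds; [exact Hr | | apply segment_dist_nonneg | |].
  - rewrite segment_dist_sq. pose proof (pow2_ge_0 (interval_dist b c y0)). lra.
  - rewrite segment_dist_sq. unfold segment_dist at 1 2.
    pose proof (cauchy_schwarz2 (x0 + h) (interval_dist b c y0) x0 (interval_dist b c y0)). nra.
  - rewrite !segment_dist_sq. nra.
Qed.

Lemma interval_dist_tangent (b c y0 : R) : c <= b -> exists gam,
  gam ^ 2 <= interval_dist b c y0 ^ 2 /\ forall h,
  interval_dist b c y0 ^ 2 + gam * h <= interval_dist b c (y0 + h) * interval_dist b c y0 /\
  interval_dist b c (y0 + h) ^ 2 <= interval_dist b c y0 ^ 2 + 2 * gam * h + h ^ 2.
Proof.
  intro Hcb.
  destruct (Rlt_le_dec b y0) as [Ht|Ht]; [|destruct (Rlt_le_dec y0 c) as [Hb|Hb]].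
  - rewrite (interval_dist_above b c y0) by lra. exists (y0 - b). split; [lra|]. intro h.
    destruct (interval_dist_ge b c (y0 + h)). assert (Hnn := interval_dist_nonneg b c (y0 + h)).
    unfold interval_dist, Rmax in *. repeat destruct Rle_dec; split; nra.
  - rewrite (interval_dist_below b c y0) by lra. exists (- (c - y0)). split; [nra|]. intro h.
    destruct (interval_dist_ge b c (y0 + h)).
    unfold interval_dist, Rmax in *. repeat destruct Rle_dec; split; nra.
  - rewrite (interval_dist_inside b c y0) by lra. exists 0. split; [nra|]. intro h.
    assert (L := interval_dist_lipschitz b c y0 (y0 + h)).
    rewrite (interval_dist_inside b c y0), Rminus_0_r in L by lra.
    replace (y0 + h - y0) with h in L by ring.
    assert (0 <= interval_dist b c (y0 + h)) by apply interval_dist_nonneg.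
    split; [nra|]. rewrite Rabs_pos_eq in L by assumption. split_Rabs; nra.
Qed.

Lemma segment_dist_slice_y (b c x0 y0 : R) : c <= b -> 0 < segment_dist b c x0 y0 ->
  exists gam, x0 ^ 2 + gam ^ 2 <= segment_dist b c x0 y0 ^ 2 /\
    tangent_sandwich (fun t => segment_dist b c x0 t) y0 (gam / segment_dist b c x0 y0).
Proof.
  intros Hcb Hr. destruct (interval_dist_tangent b c y0 Hcb) as [gam [Hg Hh]].
  exists gam. split; [rewrite segment_dist_sq; lra|]. intro h. destruct (Hh h) as [H1 H2].
  apply root_tangent_bounds; [exact Hr | | apply segment_dist_nonneg | |].
  - rewrite segment_dist_sq. pose proof (pow2_ge_0 x0). lra.
  - rewrite segment_dist_sq. unfold segment_dist at 1 2.
    pose proof (cauchy_schwarz2 x0 (interval_dist b c (y0 + h)) x0 (interval_dist b c y0)). nra.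
  - rewrite !segment_dist_sq. nra.
Qed.

Lemma segment_dist_shift_ge (b c x y h : R) : c <= b -> 0 < segment_dist b c x y ->
  segment_dist b c x y - Rabs h <= segment_dist b c (x + h) y /\
  segment_dist b c x y - Rabs h <= segment_dist b c x (y + h).
Proof.
  intros Hcb Hr. set (r := segment_dist b c x y) in *.
  assert (Hunit : forall g, g ^ 2 <= r ^ 2 -> (g / r) ^ 2 <= 1).
  { intros g Hg. replace ((g / r) ^ 2) with (g ^ 2 / r ^ 2) by (field; lra).
    apply (Rmult_le_reg_r (r ^ 2)); [nra | field_simplify; lra]. }
  split.
  - destruct (segment_dist_slice_x b c x y Hr h) as [Hlow _]. fold r in Hlow.
    assert (Hx : x ^ 2 <= r ^ 2).
    { unfold r. rewrite segment_dist_sq. pose proof (pow2_ge_0 (interval_dist b c y)). lra. }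
    assert (H := Rabs_scale_le (x / r) h (Hunit x Hx)). split_Rabs; lra.
  - destruct (segment_dist_slice_y b c x y Hcb Hr) as [gam [Hgam Hsy]]. fold r in Hgam, Hsy.
    destruct (Hsy h) as [Hlow _]. cbn beta in Hlow. fold r in Hlow.
    assert (H := Rabs_scale_le (gam / r) h ltac:(apply Hunit; pose proof (pow2_ge_0 x); lra)).
    split_Rabs; lra.
Qed.

Lemma sandwich_error_sq (rho0 beta h ep em : R) :
  0 < rho0 -> beta ^ 2 <= 1 -> Rabs h <= rho0 ->
  0 <= ep <= h ^ 2 / (2 * rho0) -> 0 <= em <= h ^ 2 / (2 * rho0) ->
  (beta * h + ep) ^ 2 + (- (beta * h) + em) ^ 2 <=
    2 * beta ^ 2 * h ^ 2 + 3 / (2 * rho0) * Rabs h ^ 3.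
Proof.
  intros Hr Hb Hh He Hm.
  set (a := Rabs h) in *. assert (Ha : 0 <= a) by apply Rabs_pos.
  assert (Hsq : h ^ 2 = a ^ 2) by (unfold a; now rewrite pow2_abs).
  set (e := a ^ 2 / (2 * rho0)).
  assert (He' : e <= a / 2)
    by (unfold e; apply (Rmult_le_reg_r (2 * rho0)); [lra | field_simplify; nra]).
  assert (Hea : e * a = a ^ 3 / (2 * rho0)) by (unfold e; field; lra).
  rewrite Hsq in He, Hm. fold e in He, Hm.
  assert (Hbh : Rabs (beta * h) <= a) by (apply Rabs_scale_le, Hb).
  replace (3 / (2 * rho0) * a ^ 3) with (3 * (e * a)) by (rewrite Hea; field; lra).
  rewrite Hsq. split_Rabs; nra.
Qed.

Lemma sandwich_taylor_sum (rho0 beta h ep em T1v T2p A eta : R) :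
  0 < rho0 -> beta ^ 2 <= 1 -> Rabs h <= rho0 -> 0 <= T2p -> A = T2p + eta / 2 -> 0 < eta ->
  Rabs h <= eta * rho0 / (3 * A) ->
  0 <= ep <= h ^ 2 / (2 * rho0) -> 0 <= em <= h ^ 2 / (2 * rho0) ->
  T1v * (ep + em) + A * ((beta * h + ep) ^ 2 + (- (beta * h) + em) ^ 2) / 2 <=
    (Rmax T1v 0 / rho0 + T2p * beta ^ 2 + eta) * h ^ 2.
Proof.
  intros Hr Hb Hh HT2 HA Heta Hh3 He Hm.
  assert (Hk : A * Rabs h <= eta * rho0 / 3).
  { apply (Rmult_le_reg_r (/ A)); [apply Rinv_0_lt_compat; lra|].
    replace (A * Rabs h * / A) with (Rabs h) by (field; lra).
    replace (eta * rho0 / 3 * / A) with (eta * rho0 / (3 * A)) by (field; lra). lra. }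
  assert (Herr := sandwich_error_sq rho0 beta h ep em Hr Hb Hh He Hm).
  assert (Hsq : h ^ 2 = Rabs h ^ 2) by (now rewrite pow2_abs).
  assert (HT1 : T1v <= Rmax T1v 0 /\ 0 <= Rmax T1v 0) by (split; [apply Rmax_l | apply Rmax_r]).
  assert (P1 : T1v * (ep + em) <= Rmax T1v 0 / rho0 * h ^ 2).
  { replace (Rmax T1v 0 / rho0 * h ^ 2) with (Rmax T1v 0 * (h ^ 2 / (2 * rho0) * 2))
      by (field; lra). nra. }
  assert (P2 : A * (3 / (2 * rho0) * Rabs h ^ 3) / 2 <= eta / 4 * h ^ 2).
  { replace (A * (3 / (2 * rho0) * Rabs h ^ 3) / 2) with (A * Rabs h * h ^ 2 * (3 / (4 * rho0)))
      by (rewrite Hsq; field; lra).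
    apply (Rle_trans _ (eta * rho0 / 3 * h ^ 2 * (3 / (4 * rho0)))).
    - apply Rmult_le_compat_r; [apply Rlt_le, Rdiv_lt_0_compat; lra|].
      apply Rmult_le_compat_r; [apply pow2_ge_0 | exact Hk].
    - right. field. lra. }
  assert (P3 : A * (2 * beta ^ 2 * h ^ 2) / 2 <= T2p * beta ^ 2 * h ^ 2 + eta / 2 * h ^ 2).
  { assert (Hbh2 : beta ^ 2 * h ^ 2 <= h ^ 2) by (pose proof (pow2_ge_0 h); nra).
    replace (A * (2 * beta ^ 2 * h ^ 2) / 2) with
      (T2p * beta ^ 2 * h ^ 2 + eta / 2 * (beta ^ 2 * h ^ 2)) by (rewrite HA; field).
    apply Rplus_le_compat_l, Rmult_le_compat_l; lra. }
  assert (HA0 : 0 < A) by lra.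
  assert (P4 : A * ((beta * h + ep) ^ 2 + (- (beta * h) + em) ^ 2) / 2 <=
               A * (2 * beta ^ 2 * h ^ 2 + 3 / (2 * rho0) * Rabs h ^ 3) / 2) by nra.
  pose proof (pow2_ge_0 h). nra.
Qed.

Lemma sym_diff2_le_comp (T T1 T2 r : R -> R) (s0 beta : R) :
  0 < r s0 -> beta ^ 2 <= 1 ->
  (forall s, is_derive T s (T1 s) /\ is_derive T1 s (T2 s)) -> continuity_pt T2 (r s0) ->
  tangent_sandwich r s0 beta ->
  sym_diff2_le (fun t => T (r t)) s0 (Rmax (T1 (r s0)) 0 / r s0 + Rmax (T2 (r s0)) 0 * beta ^ 2).
Proof.
  intros Hr Hb Hder Hc Hsand eta Heta. set (rho0 := r s0) in *.
  set (A := Rmax (T2 rho0) 0 + eta / 2).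
  assert (HT2 : T2 rho0 <= Rmax (T2 rho0) 0 /\ 0 <= Rmax (T2 rho0) 0)
    by (split; [apply Rmax_l | apply Rmax_r]).
  destruct (continuity_pt_ball T2 rho0 Hc (eta / 2) ltac:(lra)) as [d1 [Hd1 Hc1]].
  assert (Htaylor : forall t, Rabs t < d1 -> T (rho0 + t) <= T rho0 + T1 rho0 * t + A * t ^ 2 / 2).
  { apply (taylor_upper T T1 T2). intros t Ht. destruct (Hder t) as [H1 H2].
    assert (H3 := Hc1 t Ht). apply Rabs_def2 in H3.
    split; [exact H1 | split; [exact H2 | unfold A; lra]]. }
  assert (HA : eta / 2 <= A) by (unfold A; lra).
  set (del := Rmin (d1 / 2) (Rmin rho0 (eta * rho0 / (3 * A)))).
  assert (Hdel : 0 < del).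
  { unfold del. repeat apply Rmin_pos; [lra | lra | apply Rdiv_lt_0_compat; nra]. }
  exists del. split; [exact Hdel|]. intros h Hh.
  apply Rabs_lt_Rmin in Hh as [Hh1 [Hh2 Hh3]%Rabs_lt_Rmin].
  assert (Ha := Rabs_pos h). assert (Hsq : h ^ 2 = Rabs h ^ 2) by (now rewrite pow2_abs).
  assert (Hsmall : h ^ 2 / (2 * rho0) <= Rabs h / 2).
  { apply (Rmult_le_reg_r (2 * rho0)); [lra|]. field_simplify; [nra | lra]. }
  assert (Hbh := Rabs_scale_le beta h Hb).
  set (ep := r (s0 + h) - rho0 - beta * h). set (em := r (s0 - h) - rho0 + beta * h).
  assert (He : 0 <= ep <= h ^ 2 / (2 * rho0)).
  { destruct (Hsand h) as [Hl Hu]. fold rho0 in Hl, Hu. unfold ep. lra. }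
  assert (Hm : 0 <= em <= h ^ 2 / (2 * rho0)).
  { destruct (Hsand (- h)) as [Hl Hu]. fold rho0 in Hl, Hu.
    replace (s0 + - h) with (s0 - h) in * by ring.
    replace ((- h) ^ 2) with (h ^ 2) in * by ring. unfold em. lra. }
  assert (Hp := Htaylor (beta * h + ep) ltac:(split_Rabs; lra)).
  assert (Hn := Htaylor (- (beta * h) + em) ltac:(split_Rabs; lra)).
  replace (rho0 + (beta * h + ep)) with (r (s0 + h)) in Hp by (unfold ep; ring).
  replace (rho0 + (- (beta * h) + em)) with (r (s0 - h)) in Hn by (unfold em; ring).
  assert (Hsum := sandwich_taylor_sum rho0 beta h ep em (T1 rho0) (Rmax (T2 rho0) 0) A eta
                    Hr Hb ltac:(lra) (proj2 HT2) eq_refl Heta ltac:(lra) He Hm).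
  lra.
Qed.

(** * The one-dimensional barrier *)

(* [Phi] is the explicit solution of [Phi'' = 6 Phi - 3 Phi^2] with [Phi 10 = 3];
   since [6 s - 3 s^2 <= F s], it is a supersolution of the radial equation. *)
Definition Ef (s : R) : R := exp (- sqrt 6 * (s - 10)).
Definition Phi (s : R) : R := 12 * Ef s / (1 + Ef s) ^ 2.
Definition Phi1 (s : R) : R := - 12 * sqrt 6 * Ef s * (1 - Ef s) / (1 + Ef s) ^ 3.
Definition Phi2 (s : R) : R := 72 * Ef s * (1 - 4 * Ef s + Ef s ^ 2) / (1 + Ef s) ^ 4.

Lemma Ef_pos (s : R) : 0 < Ef s.
Proof. apply exp_pos. Qed.

Lemma Phi_derive (s : R) : is_derive Phi s (Phi1 s) /\ is_derive Phi1 s (Phi2 s).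
Proof.
  assert (HE := Ef_pos s). assert (S6 : sqrt 6 * sqrt 6 = 6) by (apply sqrt_sqrt; lra).
  unfold Phi, Phi1, Phi2 in *. unfold Ef in *. split.
  - auto_derive; change (s + - (10)) with (s - 10); fold (Ef s) in *; set (e := Ef s) in *.
    + intro H. nra.
    + field. intro H. nra.
  - auto_derive; change (s + - (10)) with (s - 10); fold (Ef s) in *;
      set (e := Ef s) in *; set (k := sqrt 6) in *.
    + intro H. nra.
    + assert (Hk : k ^ 2 = 6) by (simpl; rewrite Rmult_1_r; exact S6).
      field_simplify; [| intro H; nra ..]. rewrite Hk. field. nra.
Qed.

Lemma Ef_le_1 (s : R) : 10 <= s -> Ef s <= 1.
Proof.
  intro H. unfold Ef. rewrite <- exp_0. apply exp_le_compat.
  assert (0 < sqrt 6) by (apply sqrt_lt_R0; lra). nra.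
Qed.

Lemma Phi_nonneg (s : R) : 0 <= Phi s.
Proof.
  assert (HE := Ef_pos s). unfold Phi. apply Rmult_le_pos; [lra|].
  apply Rlt_le, Rinv_0_lt_compat. nra.
Qed.

Lemma Phi_at_10 : Phi 10 = 3.
Proof. unfold Phi, Ef. rewrite Rminus_diag, Rmult_0_r, exp_0. field. Qed.

Lemma Phi_le_Ef (s : R) : Phi s <= 12 * Ef s.
Proof.
  assert (HE := Ef_pos s). unfold Phi.
  apply (Rmult_le_reg_r ((1 + Ef s) ^ 2)); [nra|]. field_simplify; nra.
Qed.

Lemma Phi1_nonpos (s : R) : 10 <= s -> Phi1 s <= 0.
Proof.
  intro H. assert (HE := Ef_pos s). assert (HE1 := Ef_le_1 s H).
  assert (S6 : 0 < sqrt 6) by (apply sqrt_lt_R0; lra).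
  unfold Phi1. set (e := Ef s) in *. unfold Rdiv.
  assert (0 < / (1 + e) ^ 3) by (apply Rinv_0_lt_compat; nra).
  assert (0 <= 12 * sqrt 6 * e * (1 - e)) by (repeat apply Rmult_le_pos; lra).
  nra.
Qed.

Lemma Phi2_eq (s : R) : Phi2 s = 6 * Phi s - 3 * Phi s ^ 2.
Proof. assert (HE := Ef_pos s). unfold Phi2, Phi. field. nra. Qed.

Definition Theta (ep s : R) : R := Phi s + ep * exp s.
Definition Theta1 (ep s : R) : R := Phi1 s + ep * exp s.
Definition Theta2 (ep s : R) : R := Phi2 s + ep * exp s.

Lemma Theta_derive (ep s : R) :
  is_derive (Theta ep) s (Theta1 ep s) /\ is_derive (Theta1 ep) s (Theta2 ep s).
Proof.
  destruct (Phi_derive s) as [H1 H2]. unfold Theta, Theta1, Theta2. split.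
  - apply (is_derive_plus _ _ _ _ _ H1). auto_derive; [exact I | ring].
  - apply (is_derive_plus _ _ _ _ _ H2). auto_derive; [exact I | ring].
Qed.

Lemma Theta2_continuous (ep s : R) : continuity_pt (Theta2 ep) s.
Proof.
  apply (continuity_pt_of_is_derive _ _ (Derive (Theta2 ep) s)), Derive_correct.
  assert (HE := Ef_pos s). unfold Theta2, Phi2, Ef in *. auto_derive.
  change (s + - (10)) with (s - 10). intro H. nra.
Qed.

Lemma Theta_supersolution (ep s : R) : 0 < ep -> 10 <= s ->
  2 * Rmax (Theta1 ep s) 0 / s + Rmax (Theta2 ep s) 0 <= F (Theta ep s).
Proof.
  intros Hep Hs. set (E := ep * exp s).
  assert (HE : 0 < E) by (apply Rmult_lt_0_compat; [exact Hep | apply exp_pos]).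
  assert (HPhi := Phi_nonneg s).
  assert (HT1 : Rmax (Theta1 ep s) 0 <= E).
  { apply Rmax_lub; [|lra]. unfold Theta1. assert (Phi1 s <= 0) by (apply Phi1_nonpos; lra).
    fold E. lra. }
  assert (HT1' : 2 * Rmax (Theta1 ep s) 0 / s <= E).
  { apply (Rmult_le_reg_r s); [lra|]. field_simplify; [| lra].
    pose proof (Rmax_r (Theta1 ep s) 0). nra. }
  assert (HT2 : Rmax (Theta2 ep s) 0 <= F (Phi s) + E).
  { apply Rmax_lub.
    - unfold Theta2. fold E. rewrite Phi2_eq. assert (H6 := F_ge_quadratic (Phi s) HPhi). lra.
    - assert (H6 := F_nonneg (Phi s) HPhi). lra. }
  assert (HF := F_add_ge (Phi s) E HPhi ltac:(lra)).
  unfold Theta. fold E. lra.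
Qed.

Lemma ln8_lt_3 : ln 8 < 3.
Proof.
  assert (H := exp_ge_taylor 3 3 ltac:(lra)). simpl in H.
  rewrite <- (ln_exp 3). apply ln_increasing; lra.
Qed.

Lemma laplacian_le_Theta_at_local_max (u : R -> R -> R) (b c ep xs ys del : R) :
  C2_on open_half u -> c <= b -> 0 < segment_dist b c xs ys -> 0 < del -> del <= xs ->
  (forall h, Rabs h < del -> u (xs + h) ys - u xs ys <=
     Theta ep (segment_dist b c (xs + h) ys) - Theta ep (segment_dist b c xs ys)) ->
  (forall h, Rabs h < del -> u xs (ys + h) - u xs ys <=
     Theta ep (segment_dist b c xs (ys + h)) - Theta ep (segment_dist b c xs ys)) ->
  laplacian u xs ys <= 2 * Rmax (Theta1 ep (segment_dist b c xs ys)) 0 / segment_dist b c xs ys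
                       + Rmax (Theta2 ep (segment_dist b c xs ys)) 0.
Proof.
  intros HC Hcb Hr Hdel Hdx Hmx Hmy.
  set (rs := segment_dist b c xs ys) in *.
  assert (Hx := segment_dist_ge b c xs ys ltac:(lra)). fold rs in Hx.
  destruct (segment_dist_slice_y b c xs ys Hcb Hr) as [gam [Hgam Hsy]]. fold rs in Hgam, Hsy.
  assert (Hunit : (xs / rs) ^ 2 + (gam / rs) ^ 2 <= 1).
  { replace ((xs / rs) ^ 2 + (gam / rs) ^ 2) with ((xs ^ 2 + gam ^ 2) / rs ^ 2) by (field; lra).
    apply (Rmult_le_reg_r (rs ^ 2)); [nra|]. field_simplify; nra. }
  set (T1p := Rmax (Theta1 ep rs) 0). set (T2p := Rmax (Theta2 ep rs) 0).
  assert (HT2p : 0 <= T2p) by apply Rmax_r.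
  apply (Rle_trans _ ((T1p / rs + T2p * (xs / rs) ^ 2) + (T1p / rs + T2p * (gam / rs) ^ 2))).
  - apply (laplacian_le_at_axis_max u (fun x y => Theta ep (segment_dist b c x y)) xs ys del);
      try assumption.
    + apply (sym_diff2_le_comp (Theta ep) (Theta1 ep) (Theta2 ep) (fun t => segment_dist b c t ys));
        [exact Hr | nra | apply Theta_derive | apply Theta2_continuous | ].
      now apply segment_dist_slice_x.
    + apply (sym_diff2_le_comp (Theta ep) (Theta1 ep) (Theta2 ep) (fun t => segment_dist b c xs t));
        [exact Hr | nra | apply Theta_derive | apply Theta2_continuous | exact Hsy].
  - assert (T2p * ((xs / rs) ^ 2 + (gam / rs) ^ 2) <= T2p) by nra.
    replace (2 * T1p / rs) with (T1p / rs + T1p / rs) by (field; lra). nra.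
Qed.

(** * The glued surface *)

Lemma sqrt3_sq : sqrt 3 * sqrt 3 = 3.
Proof. apply sqrt_sqrt; lra. Qed.

Lemma sqrt3_gt : 1.7 < sqrt 3.
Proof. assert (0 <= sqrt 3) by apply sqrt_pos. pose proof sqrt3_sq. nra. Qed.

Lemma pred_mod (n i : nat) : (1 <= n)%nat -> (i < n)%nat ->
  exists i', (i' < n)%nat /\ Nat.modulo (S i') n = i.
Proof.
  intros Hn Hi. destruct i as [|i].
  - exists (n - 1)%nat. split; [lia|]. replace (S (n - 1)) with n by lia. apply Nat.Div0.mod_same.
  - exists i. split; [lia|]. apply Nat.mod_small. lia.
Qed.

Section GluedSurface.

Variables (n : nat) (a b : nat -> R) (u : nat -> R -> R -> R).
Hypothesis hn : (1 <= n)%nat.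
Hypothesis ha : forall i, (i < n)%nat -> 0 < a i.
Hypothesis hcont : forall i, (i < n)%nat -> forall x y, closed_half x y -> cont2 (u i) x y.
Hypothesis hC2 : forall i, (i < n)%nat -> C2_on open_half (u i).
Hypothesis hPDE : forall i, (i < n)%nat -> forall x y, open_half x y ->
  gauss_curv (u i) x y = -1 + phi_norm2 (u i) x y.
Hypothesis hglue : forall i, (i < n)%nat -> forall x y,
  let j := Nat.modulo (S i) n in
  in_B (b j - a j) x y ->
  u j x y = u i (glue_x (b j - a j) (b i) x y) (glue_y (b j - a j) (b i) x y).

Let ydist k y := interval_dist (b k) (b k - a k) y.
Let dist k x y := segment_dist (b k) (b k - a k) x y.

Lemma chart_change_above (i : nat) (x y : R) : (i < n)%nat -> 0 <= x ->
  b i <= y -> x <= sqrt 3 * (y - b i) ->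
  exists k x' y', (k < n)%nat /\ x' = (sqrt 3 * (y - b i) - x) / 2 /\
    u k x' y' = u i x y /\ dist k x' y' = dist i x y.
Proof.
  intros Hi Hx Hy Hxy. assert (S3 := sqrt3_sq). assert (Hai := ha i Hi).
  set (j := Nat.modulo (S i) n).
  assert (Hj : (j < n)%nat) by (apply Nat.mod_upper_bound; lia).
  assert (Haj := ha j Hj).
  set (cj := b j - a j). set (Y := y - b i).
  (* [(px, py)] is the point of [B_j] that the gluing map sends to [(x, y)]. *)
  set (px := - x / 2 + sqrt 3 * Y / 2).
  set (py := cj - sqrt 3 * x / 2 - Y / 2).
  assert (HB : in_B cj px py) by (unfold in_B, px, py, Y; split; nra).
  assert (Hg := hglue i Hi px py HB). fold j cj in Hg.
  replace (glue_x cj (b i) px py) with x in Hg by (unfold glue_x, px, py, Y; nra).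
  replace (glue_y cj (b i) px py) with y in Hg by (unfold glue_y, px, py, Y; nra).
  exists j, px, py. split; [exact Hj|]. split; [unfold px, Y; field|]. split; [exact Hg|].
  unfold dist, segment_dist. fold cj. rewrite (interval_dist_above (b i) (b i - a i) y) by lra.
  rewrite (interval_dist_below (b j) cj py); [| unfold cj; lra |].
  - apply f_equal. unfold py, px, Y.
    replace (x ^ 2 + (y - b i) ^ 2) with ((x ^ 2 + (y - b i) ^ 2) * (1 + sqrt 3 * sqrt 3) / 4)
      by (rewrite S3; field).
    field.
  - unfold py, Y. assert (0 <= sqrt 3 * x) by (apply Rmult_le_pos; [apply sqrt_pos | lra]). lra.
Qed.

Lemma chart_change_below (i : nat) (x y : R) : (i < n)%nat -> 0 <= x ->
  y <= b i - a i -> x <= sqrt 3 * (b i - a i - y) ->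
  exists k x' y', (k < n)%nat /\ x' = (sqrt 3 * (b i - a i - y) - x) / 2 /\
    u k x' y' = u i x y /\ dist k x' y' = dist i x y.
Proof.
  intros Hi Hx Hy Hxy. assert (S3 := sqrt3_sq).
  destruct (pred_mod n i hn Hi) as [i' [Hi' Hmod]].
  assert (Hai := ha i Hi). assert (Hai' := ha i' Hi'). assert (S3p := sqrt_pos 3).
  set (c := b i - a i) in *.
  assert (HB : in_B c x y) by (unfold in_B; nra).
  assert (Hg := hglue i' Hi' x y). cbn zeta in Hg. rewrite Hmod in Hg. specialize (Hg HB).
  exists i', (glue_x c (b i') x y), (glue_y c (b i') x y).
  split; [exact Hi'|]. split; [unfold glue_x; field|]. split; [symmetry; exact Hg|].
  unfold dist, segment_dist. fold c.
  rewrite (interval_dist_below (b i) c y) by (unfold c in *; lra).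
  rewrite interval_dist_above; [| lra | unfold glue_y; nra].
  apply f_equal. unfold glue_x, glue_y.
  replace (x ^ 2 + (c - y) ^ 2) with ((x ^ 2 + (y - c) ^ 2) * (1 + sqrt 3 * sqrt 3) / 4)
    by (rewrite S3; field).
  field.
Qed.

Lemma chart_change (i : nat) (x y : R) : (i < n)%nat -> 0 <= x ->
  0 < ydist i y -> x <= sqrt 3 * ydist i y ->
  exists k x' y', (k < n)%nat /\ x' = (sqrt 3 * ydist i y - x) / 2 /\
    u k x' y' = u i x y /\ dist k x' y' = dist i x y.
Proof.
  intros Hi Hx Hd Hxd. assert (Hai := ha i Hi). unfold ydist in *.
  destruct (interval_dist_pos_cases (b i) (b i - a i) y ltac:(lra) Hd) as [[Hy E] | [Hy E]];
    rewrite E in *; [apply chart_change_above | apply chart_change_below]; assumption.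
Qed.

Lemma chart_bound_ln8 (k : nat) (x y : R) : (k < n)%nat -> 1 <= x -> u k x y <= ln 8.
Proof.
  intros Hk Hx. apply (keller_osserman_bound (u k)); try assumption.
  - intros x' y' Hx'. now apply hcont.
  - now apply hC2.
  - intros x' y' Hx'. apply laplacian_eq_F, hPDE; assumption.
Qed.

Lemma u_le_ln8_far (i : nat) (x y : R) : (i < n)%nat -> 0 <= x -> 9 <= dist i x y ->
  u i x y <= ln 8.
Proof.
  intros Hi Hx Hr.
  destruct (Rle_or_lt 1 x) as [H1|H1]; [now apply chart_bound_ln8|].
  assert (Hsq := segment_dist_sq (b i) (b i - a i) x y). fold (dist i x y) (ydist i y) in Hsq.
  assert (Hd0 := interval_dist_nonneg (b i) (b i - a i) y). fold (ydist i y) in Hd0.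
  assert (Hd8 : 8 <= ydist i y) by nra.
  assert (S3 := sqrt3_gt).
  destruct (chart_change i x y Hi Hx ltac:(lra) ltac:(nra)) as (k & x' & y' & Hk & Hx' & Hu & _).
  rewrite <- Hu. apply chart_bound_ln8; [exact Hk|]. rewrite Hx'. nra.
Qed.

Section Comparison.

Variables ep L : R.
Hypothesis hep : 0 < ep.
Hypothesis hL : 10 < L.
Hypothesis hL_exp : forall s, L <= s -> 3 < ep * exp s.

Let in_box k x y := 0 <= x <= L /\ b k - a k - L <= y <= b k + L.
(* The truncation at [ln 8] makes [G] negative wherever [dist <= 10], since [Theta ep 10 > 3]. *)
Let G k x y := Rmin (u k x y) (ln 8) - Theta ep (Rmax (dist k x y) 10).

Lemma in_box_of_bounds (k : nat) (x y : R) : 0 <= x <= L -> ydist k y <= L -> in_box k x y.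
Proof.
  intros Hx Hy. destruct (interval_dist_ge (b k) (b k - a k) y) as [H1 H2].
  unfold in_box, ydist in *. repeat split; lra.
Qed.

Lemma in_box_of_dist (k : nat) (x y : R) : 0 <= x -> dist k x y <= L -> in_box k x y.
Proof.
  intros Hx Hr. destruct (segment_dist_ge (b k) (b k - a k) x y Hx) as [H1 H2].
  apply in_box_of_bounds; unfold dist, ydist in *; lra.
Qed.

Lemma G_continuous (k : nat) (x y : R) : (k < n)%nat -> 0 <= x -> continuity_2d_pt (G k) x y.
Proof.
  intros Hk Hx. apply continuity_2d_pt_minus.
  - apply (continuity_1d_2d_pt_comp (fun z => Rmin z (ln 8)) (u k)).
    + apply continuity_pt_Rmin_const.
    + apply cont2_2d, hcont; assumption.
  - apply (continuity_1d_2d_pt_comp (fun z => Theta ep (Rmax z 10)) (dist k));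
      [|apply segment_dist_continuous].
    apply (continuity_pt_comp (fun z => Rmax z 10) (Theta ep)).
    + apply continuity_pt_Rmax_const.
    + exact (continuity_pt_of_is_derive _ _ _ (proj1 (Theta_derive ep _))).
Qed.

Lemma G_max_exists : exists k xm ym, (k < n)%nat /\ in_box k xm ym /\
  forall k', (k' < n)%nat -> forall x y, in_box k' x y -> G k' x y <= G k xm ym.
Proof.
  apply finite_family_max; [exact hn|]. intros k Hk. assert (Hak := ha k Hk).
  destruct (rectangle_max (G k) 0 L (b k - a k - L) (b k + L)) as (x0 & y0 & Hx0 & Hy0 & HM);
    [lra | lra | intros x y Hx _; apply G_continuous; [exact Hk | lra] |].
  exists x0, y0. split; [split; assumption|]. intros x y [Hx Hy]. now apply HM.
Qed.

Lemma G_pos_region (k : nat) (x y : R) : 0 < G k x y -> 10 < dist k x y < L.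
Proof.
  unfold G. intro Hpos. assert (Hmin := Rmin_r (u k x y) (ln 8)). assert (L8 := ln8_lt_3).
  assert (HPhi := Phi_nonneg (Rmax (dist k x y) 10)).
  assert (Hexp : 0 < ep * exp (Rmax (dist k x y) 10))
    by (apply Rmult_lt_0_compat; [exact hep | apply exp_pos]).
  unfold Theta in Hpos. split.
  - destruct (Rle_or_lt (dist k x y) 10) as [Hle|]; [exfalso | assumption].
    rewrite Rmax_right, Phi_at_10 in * by exact Hle. lra.
  - destruct (Rle_or_lt L (dist k x y)) as [Hle|]; [exfalso | assumption].
    rewrite Rmax_left in * by lra. assert (H3 := hL_exp _ Hle). lra.
Qed.

Lemma G_eq_far (k : nat) (x y : R) : (k < n)%nat -> 0 <= x -> 10 <= dist k x y ->
  G k x y = u k x y - Theta ep (dist k x y).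
Proof.
  intros Hk Hx Hr. unfold G. rewrite Rmax_left by lra.
  rewrite Rmin_left; [reflexivity | apply u_le_ln8_far; [exact Hk | exact Hx | lra]].
Qed.

Lemma G_max_off_axis (k : nat) (xm ym : R) : (k < n)%nat -> in_box k xm ym -> 0 < G k xm ym ->
  exists k' xs ys, (k' < n)%nat /\ 0 < xs /\ G k' xs ys = G k xm ym.
Proof.
  intros Hk [Hxm _] Hpos.
  destruct (Rlt_or_le 0 xm) as [Hx|Hx]; [now exists k, xm, ym|].
  replace xm with 0 in * by lra.
  destruct (G_pos_region k 0 ym Hpos) as [Hr _].
  assert (Hd : dist k 0 ym = ydist k ym) by apply segment_dist_on_axis.
  assert (S3 := sqrt3_gt).
  destruct (chart_change k 0 ym Hk ltac:(lra) ltac:(lra) ltac:(nra))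
    as (k' & x' & y' & Hk' & Hx' & Hu & Hr').
  exists k', x', y'. split; [exact Hk'|]. split; [rewrite Hx'; nra|].
  unfold G. rewrite Hu, Hr'. reflexivity.
Qed.

Lemma G_max_laplacian (k : nat) (xs ys : R) : (k < n)%nat -> 0 < xs -> 10 < dist k xs ys < L ->
  (forall k', (k' < n)%nat -> forall x y, in_box k' x y -> G k' x y <= G k xs ys) ->
  laplacian (u k) xs ys <= F (Theta ep (dist k xs ys)).
Proof.
  intros Hk Hxs Hr Hmax. assert (Hak := ha k Hk).
  assert (Hlocal : forall x y, 0 <= x -> 10 <= dist k x y -> in_box k x y ->
            u k x y - Theta ep (dist k x y) <= u k xs ys - Theta ep (dist k xs ys)).
  { intros x y Hx Hd Hbox. rewrite <- (G_eq_far k x y Hk Hx Hd).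
    rewrite <- (G_eq_far k xs ys Hk ltac:(lra) ltac:(lra)). now apply Hmax. }
  unfold dist, ydist, in_box in *.
  destruct (segment_dist_ge (b k) (b k - a k) xs ys ltac:(lra)) as [Hrx Hry].
  set (rs := segment_dist (b k) (b k - a k) xs ys) in *.
  assert (Hrs : 0 < rs) by lra.
  set (del := Rmin xs (Rmin (L - rs) (rs - 10))).
  assert (Hdel : 0 < del) by (unfold del; repeat apply Rmin_pos; lra).
  apply (Rle_trans _ (2 * Rmax (Theta1 ep rs) 0 / rs + Rmax (Theta2 ep rs) 0));
    [apply (laplacian_le_Theta_at_local_max (u k) (b k) (b k - a k) ep xs ys del);
     [now apply hC2 | lra | exact Hrs | exact Hdel | apply Rmin_l | |] |].
  - intros h Hh. apply Rabs_lt_Rmin in Hh as [Hhx [Hhl Hhr]%Rabs_lt_Rmin].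
    destruct (segment_dist_shift_ge (b k) (b k - a k) xs ys h ltac:(lra) Hrs) as [Hlow _].
    enough (u k (xs + h) ys - Theta ep (segment_dist (b k) (b k - a k) (xs + h) ys) <=
            u k xs ys - Theta ep rs) by (fold rs; lra).
    apply Hlocal; [split_Rabs; lra | fold rs in Hlow; lra |].
    apply in_box_of_bounds; unfold ydist; split_Rabs; lra.
  - intros h Hh. apply Rabs_lt_Rmin in Hh as [Hhx [Hhl Hhr]%Rabs_lt_Rmin].
    destruct (segment_dist_shift_ge (b k) (b k - a k) xs ys h ltac:(lra) Hrs) as [_ Hlow].
    assert (Hlip := interval_dist_lipschitz (b k) (b k - a k) ys (ys + h)).
    replace (ys + h - ys) with h in Hlip by ring.
    enough (u k xs (ys + h) - Theta ep (segment_dist (b k) (b k - a k) xs (ys + h)) <=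
            u k xs ys - Theta ep rs) by (fold rs; lra).
    apply Hlocal; [lra | fold rs in Hlow; lra |].
    apply in_box_of_bounds; [lra | unfold ydist; split_Rabs; lra].
  - apply Theta_supersolution; [exact hep | lra].
Qed.

Lemma G_nonpos (k : nat) (x y : R) : (k < n)%nat -> in_box k x y -> G k x y <= 0.
Proof.
  intros Hk0 Hbox0.
  destruct G_max_exists as (km & xm & ym & Hkm & Hbox & Hmax).
  apply (Rle_trans _ (G km xm ym)); [now apply Hmax|].
  destruct (Rle_or_lt (G km xm ym) 0) as [|Hpos]; [assumption | exfalso].
  destruct (G_max_off_axis km xm ym Hkm Hbox Hpos) as (k' & xs & ys & Hk & Hxs & HG).
  rewrite <- HG in Hmax, Hpos.
  destruct (G_pos_region k' xs ys Hpos) as [Hr1 Hr2].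
  assert (Hlap := G_max_laplacian k' xs ys Hk Hxs (conj Hr1 Hr2) Hmax).
  rewrite (laplacian_eq_F _ _ _ (hPDE k' Hk xs ys Hxs)) in Hlap.
  rewrite (G_eq_far k' xs ys Hk (Rlt_le _ _ Hxs) (Rlt_le _ _ Hr1)) in Hpos.
  set (T := Theta ep (dist k' xs ys)) in *.
  assert (HT : 0 <= T).
  { unfold T, Theta. pose proof (Phi_nonneg (dist k' xs ys)).
    pose proof (exp_pos (dist k' xs ys)). nra. }
  assert (Hinc := F_add_ge T (u k' xs ys - T) HT ltac:(lra)).
  rewrite Rplus_minus in Hinc. lra.
Qed.

End Comparison.

Lemma u_le_Phi_dist (i : nat) (x y : R) : (i < n)%nat -> 0 <= x -> 10 <= dist i x y ->
  u i x y <= Phi (dist i x y).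
Proof.
  intros Hi Hx Hr.
  assert (Hu8 : u i x y <= ln 8) by (apply u_le_ln8_far; [exact Hi | exact Hx | lra]).
  set (rt := dist i x y) in *.
  assert (Heps : forall ep, 0 < ep -> u i x y <= Phi rt + ep * exp rt).
  { intros ep Hep. set (L := Rmax (rt + 1) (ln (3 / ep)) + 1).
    assert (HL1 : rt + 1 <= Rmax (rt + 1) (ln (3 / ep))) by apply Rmax_l.
    assert (HL2 : ln (3 / ep) <= Rmax (rt + 1) (ln (3 / ep))) by apply Rmax_r.
    assert (HLexp : forall s, L <= s -> 3 < ep * exp s).
    { intros s Hs.
      assert (Hs' : exp (ln (3 / ep)) < exp s) by (apply exp_increasing; unfold L in Hs; lra).
      rewrite exp_ln in Hs' by (apply Rdiv_lt_0_compat; lra).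
      apply (Rmult_lt_compat_l ep) in Hs'; [|exact Hep].
      replace (ep * (3 / ep)) with 3 in Hs' by (field; lra). exact Hs'. }
    assert (HrL : rt < L) by (unfold L; lra).
    assert (HG := G_nonpos ep L Hep ltac:(lra) HLexp i x y Hi
                    (in_box_of_dist L i x y Hx (Rlt_le _ _ HrL))).
    cbn beta in HG. fold rt in HG. rewrite Rmax_left, Rmin_left in HG by lra.
    unfold Theta in HG. lra. }
  destruct (Rle_or_lt (u i x y) (Phi rt)) as [|Hlt]; [assumption|].
  assert (He := exp_pos rt).
  assert (H := Heps ((u i x y - Phi rt) / (2 * exp rt)) ltac:(apply Rdiv_lt_0_compat; lra)).
  replace ((u i x y - Phi rt) / (2 * exp rt) * exp rt) with ((u i x y - Phi rt) / 2) in H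
    by (field; lra).
  lra.
Qed.

End GluedSurface.

Lemma nonneg_closed_half (u : R -> R -> R) :
  (forall x y, closed_half x y -> cont2 u x y) -> (forall x y, open_half x y -> 0 <= u x y) ->
  forall x y, closed_half x y -> 0 <= u x y.
Proof.
  unfold closed_half, open_half. intros Hc Hpos x y Hx.
  destruct (Rlt_or_le 0 x) as [Hx0|Hx0]; [now apply Hpos|]. replace x with 0 in * by lra.
  destruct (Rle_or_lt 0 (u 0 y)) as [|Hneg]; [assumption | exfalso].
  destruct (continuity_pt_ball _ 0 (cont2_slice_x u 0 y (Hc 0 y (Rle_refl 0))) (- u 0 y))
    as [d [Hd Hnear]]; [lra|].
  assert (H1 := Hnear (d / 2) ltac:(rewrite Rminus_0_r, Rabs_pos_eq; lra)).
  assert (H2 := Hpos (d / 2) y ltac:(lra)).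
  apply Rabs_def2 in H1. lra.
Qed.

Lemma modw_le_segment_dist (b c x y K : R) : Rabs b + Rabs c <= K -> 0 <= x ->
  modw x y <= segment_dist b c x y + K.
Proof.
  intros HK Hx. destruct (interval_dist_ge b c y) as [H1 H2].
  assert (Hd := interval_dist_nonneg b c y).
  assert (Hr := segment_dist_sq b c x y). assert (Hr0 := segment_dist_nonneg b c x y).
  destruct (segment_dist_ge b c x y Hx) as [_ Hdr].
  assert (Hy : Rabs y <= interval_dist b c y + K) by (split_Rabs; lra).
  assert (Hy2 : y ^ 2 <= (interval_dist b c y + K) ^ 2).
  { rewrite <- pow2_abs. apply pow_incr. split; [apply Rabs_pos | exact Hy]. }
  unfold modw. rewrite <- (sqrt_pow2 (segment_dist b c x y + K)) by (split_Rabs; lra).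
  assert (HK0 : 0 <= K) by (pose proof (Rabs_pos b); pose proof (Rabs_pos c); lra).
  assert (interval_dist b c y * K <= segment_dist b c x y * K) by (apply Rmult_le_compat_r; lra).
  apply sqrt_le_1_alt. nra.
Qed.

Lemma Phi_exp_bound (s m K : R) : m - K <= s ->
  Phi s <= 12 * exp (sqrt 6 * (10 + K)) * exp (- sqrt 6 * m).
Proof.
  intro Hs. apply (Rle_trans _ _ _ (Phi_le_Ef s)).
  rewrite Rmult_assoc, <- exp_plus. apply Rmult_le_compat_l; [lra|].
  unfold Ef. apply exp_le_compat. assert (0 < sqrt 6) by (apply sqrt_lt_R0; lra). nra.
Qed.

Theorem corollary5p3
  (n : nat) (hn : (1 <= n)%nat)
  (a b : nat -> R) (ha : forall i, (i < n)%nat -> 0 < a i)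
  (u : nat -> R -> R -> R)
  (* g = e^{u i} |dw|^2 on the closed half-plane H_i: continuous up to the boundary,
     C^2 in the interior *)
  (hcont : forall i, (i < n)%nat -> forall x y, closed_half x y -> cont2 (u i) x y)
  (hC2 : forall i, (i < n)%nat -> C2_on open_half (u i))
  (* curvature equation and nonpositive curvature *)
  (hPDE : forall i, (i < n)%nat -> forall x y, open_half x y ->
            gauss_curv (u i) x y = -1 + phi_norm2 (u i) x y)
  (hneg : forall i, (i < n)%nat -> forall x y, open_half x y ->
            gauss_curv (u i) x y <= 0)
  (* g is a well-defined metric on M: compatibility with the gluing B_{i+1} ~ T_i *)
  (hglue : forall i, (i < n)%nat -> forall x y,
            let j := Nat.modulo (S i) n in
            in_B (b j - a j) x y ->
            u j x y = u i (glue_x (b j - a j) (b i) x y) (glue_y (b j - a j) (b i) x y)) :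
  exists C r0 : R, 0 < C /\ 0 < r0 /\
    forall i, (i < n)%nat -> forall x y, closed_half x y -> r0 <= modw x y ->
      0 <= u i x y /\
      u i x y <= C * sqrt (modw x y) * exp (- sqrt 6 * modw x y).
Proof.
  destruct (finite_upper_bound (fun i => Rabs (b i) + Rabs (b i - a i)) n) as [K [HK0 HK]].
  assert (HC : 0 < 12 * exp (sqrt 6 * (10 + K)))
    by (apply Rmult_lt_0_compat; [lra | apply exp_pos]).
  exists (12 * exp (sqrt 6 * (10 + K))), (10 + K + 1). split; [exact HC | split; [lra|]].
  intros i Hi x y Hx Hr. split.
  - apply (nonneg_closed_half (u i)); [now apply hcont | | exact Hx].
    intros x' y' Hx'. apply nonneg_of_curvature; [apply hPDE | apply hneg]; assumption.
  - assert (Hm := modw_le_segment_dist (b i) (b i - a i) x y K (HK i Hi) Hx).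
    assert (Hdec := u_le_Phi_dist n a b u hn ha hcont hC2 hPDE hglue i x y Hi Hx ltac:(lra)).
    assert (HPhi := Phi_exp_bound (segment_dist (b i) (b i - a i) x y) (modw x y) K ltac:(lra)).
    assert (Hs1 : 1 <= sqrt (modw x y)) by (rewrite <- sqrt_1; apply sqrt_le_1_alt; lra).
    assert (He := exp_pos (- sqrt 6 * modw x y)).
    assert (12 * exp (sqrt 6 * (10 + K)) * exp (- sqrt 6 * modw x y) * 1 <=
            12 * exp (sqrt 6 * (10 + K)) * exp (- sqrt 6 * modw x y) * sqrt (modw x y))
      by (apply Rmult_le_compat_l; [nra | exact Hs1]).
    lra.
Qed.
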